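(* Let $\pi,\tau\in S_n$ with $d(\pi,\tau)=t$, and let $\lambda=\lambda(\pi)$, $\mu=\lambda(\tau)$. Then \[\Delta(\lambda,\mu)\le t\sqrt{n/2}.\]
   Context: Permutations are written in one-line notation. For $\pi\in S_n$, $\lambda(\pi)$ denotes the shape of the tableaux associated with $\pi$ by the RSK correspondence. The distance $d(\pi,\tau)$ is the least number of adjacent transpositions $(k,k+1)$, $1\le k\le n-1$, whose successive left multiplication transforms $\pi$ into $\tau$. For partitions $\lambda,\mu$ of $n$ (parts padded with zeros), $\Delta(\lambda,\mu)=\frac12\sum_{i=1}^n|\lambda_i-\mu_i|$. *)

From mathcomp Require Import all_boot all_order all_algebra all_fingroup.
Set Implicit Arguments. Unset Strict Implicit. Unset Printing Implicit Defensive.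
Import Order.TTheory GRing.Theory Num.Theory.

Definition row_bump (r : seq nat) (x : nat) : option (seq nat * nat) :=
  let i := find (fun y => x < y) r in
  if i < size r then Some (set_nth 0 r i x, nth 0 r i) else None.

(* Insertion of x into a tableau (list of rows, top row first). *)
Fixpoint rsk_insert (T : seq (seq nat)) (x : nat) : seq (seq nat) :=
  match T with
  | [::] => [:: [:: x]]
  | r :: T' =>
      match row_bump r x with
      | None => rcons r x :: T'
      | Some (r', y) => r' :: rsk_insert T' y
      end
  end.

Definition rsk_P (w : seq nat) : seq (seq nat) := foldl rsk_insert [::] w.

(* One-line notation of pi in S_n (values shifted to 0..n-1). *)
Definition one_line n (pi : 'S_n) : seq nat := [seq val (pi i) | i <- enum 'I_n].

Definition rsk_shape n (pi : 'S_n) : seq nat := map size (rsk_P (one_line pi)).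

(* Left multiplication of pi by a transposition (i j):
   x |-> (i j)(pi x).  In MathComp, (p * q) x = q (p x), so this is
   pi * tperm i j. *)
Definition left_mul_tperm n (ij : 'I_n * 'I_n) (pi : 'S_n) : 'S_n :=
  pi * tperm ij.1 ij.2.

(* pi can be turned into tau by t successive left multiplications by
   adjacent transpositions (k,k+1) (pairs (i,j) of 'I_n with j = i+1,
   i.e. k ranges over 1..n-1 in the paper's 1-based indexing). *)
Definition adj_reach n (t : nat) (pi tau : 'S_n) : Prop :=
  exists ks : seq ('I_n * 'I_n),
    [/\ size ks = t, all (fun ij => val ij.2 == (val ij.1).+1) ks &
        foldl (fun p ij => left_mul_tperm ij p) pi ks = tau].

Definition adj_dist n (pi tau : 'S_n) (t : nat) : Prop :=
  adj_reach t pi tau /\ forall t', adj_reach t' pi tau -> t <= t'.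

Definition Delta (R : numDomainType) n (la mu : seq nat) : R :=
  (\sum_(i < n) `|((nth 0 la i)%:R - (nth 0 mu i)%:R : R)|) / 2%:R.

(* By Greene's theorem, for a word w with distinct letters the sum of the first k rows of its
   RSK shape is the largest total size of k disjoint increasing subsequences of w.  For the reading
   word of the insertion tableau this maximum is read off row by row (an increasing subsequence
   meets each column at most once), and it transfers to w because row insertion is a chain of
   Knuth moves, which preserve these maxima.
   Left multiplication by (k k+1) swaps the letters k and k+1 of the one-line word.  If k precedes
   k+1, no increasing subsequence of the new word contains both, so every partial row sum of the new
   shape is at most the old one and at least the old one minus 1.  Two partitions of n with such
   interlaced partial sums differ by alternating +1/-1 in D parts, and as they are nonincreasing
   D^2 <= 2n, i.e. Delta <= sqrt(n/2); the triangle inequality for Delta sums this over t steps. *)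

From Stdlib Require Import Relation_Operators.
From mathcomp Require Import all_boot all_order all_algebra all_fingroup.
From mathcomp Require Import zify ring lra.
Import Order.TTheory GRing.Theory Num.Theory.
Set Implicit Arguments. Unset Strict Implicit. Unset Printing Implicit Defensive.

Lemma sorted_subseq_lt (u v s : seq nat) a b :
  uniq (u ++ a :: v) -> subseq s (u ++ a :: v) -> sorted ltn s ->
  a \in s -> b \in s -> b \in v -> a < b.
Proof.
move=> U /(subseq_uniqP U) E + as_ bs bv; rewrite E.
rewrite sorted_pairwise; last exact: ltn_trans.
rewrite filter_cat /= as_ pairwise_cat => /and3P[_ _ /= /andP[/allP + _]].
by apply; rewrite mem_filter bs.
Qed.

Lemma notin_uniq_cat (T : eqType) (a b : seq T) t : uniq (a ++ b) -> t \in a -> t \notin b.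
Proof.
rewrite cat_uniq => /and3P[_ /hasPn nab _] ta; apply/negP => tb.
by have := nab t tb; rewrite ta.
Qed.

Lemma subseq_window (u m v s : seq nat) : uniq (u ++ m ++ v) -> subseq s (u ++ m ++ v) ->
  exists A B, [/\ subseq A u, subseq B v & s = A ++ [seq t <- m | t \in s] ++ B].
Proof.
move=> U /(subseq_uniqP U) E.
exists [seq t <- u | t \in s], [seq t <- v | t \in s].
by rewrite !filter_subseq {1}E !filter_cat.
Qed.

Lemma subseq_swap (s u v : seq nat) a b :
  uniq (u ++ a :: b :: v) -> subseq s (u ++ a :: b :: v) ->
  ~~ ((a \in s) && (b \in s)) -> subseq s (u ++ b :: a :: v).
Proof.
move=> U /(subseq_uniqP U) E nab.
have -> : s = [seq t <- u ++ b :: a :: v | t \in s].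
  by rewrite {1}E !filter_cat /=; case: (a \in s) nab; case: (b \in s).
exact: filter_subseq.
Qed.

Lemma sorted_cat_cons (T : Type) (r : rel T) (C E : seq T) y :
  sorted r (C ++ y :: E) = sorted r (rcons C y) && path r y E.
Proof. by case: C => [|c C] //=; rewrite cat_path rcons_path /= andbA. Qed.

Lemma sorted_rcons_lt (A : seq nat) x y :
  sorted ltn (rcons A x) -> x < y -> sorted ltn (rcons A y).
Proof.
case: A => [|a A] //=; rewrite !rcons_path => /andP[-> h] xy /=.
exact: ltn_trans h xy.
Qed.

Lemma sorted_rcons_all (R : seq nat) x :
  sorted ltn R -> all (fun r => r < x) R -> sorted ltn (rcons R x).
Proof.
case: R => [|c R] // sR aR; move: sR; rewrite /= rcons_path => -> /=.
exact: (allP aR _ (mem_last c R)).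
Qed.

Lemma subseq_cons2 (T : eqType) (x : T) s1 s2 : subseq (x :: s1) (x :: s2) = subseq s1 s2.
Proof. by rewrite /= eqxx. Qed.

(** * Increasing families *)

Definition inc_subseq (w s : seq nat) : bool := subseq s w && sorted ltn s.

Definition inc_family (k : nat) (w : seq nat) (F : seq (seq nat)) : bool :=
  [&& size F <= k, all (inc_subseq w) F & uniq (flatten F)].

Definition has_inc_family (k : nat) (w : seq nat) (m : nat) : Prop :=
  exists2 F, inc_family k w F & size (flatten F) = m.

Lemma inc_family_perm k w F G : perm_eq F G -> inc_family k w F = inc_family k w G.
Proof.
move=> pFG; rewrite /inc_family (perm_size pFG) (perm_all _ pFG).
by rewrite (perm_uniq (perm_flatten pFG)).
Qed.

Lemma inc_family_filter k w F (P : pred nat) :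
  inc_family k w F -> inc_family k [seq a <- w | P a] (map (filter P) F).
Proof.
move=> /and3P[szF /allP aF UF]; apply/and3P; split.
- by rewrite size_map.
- apply/allP => _ /mapP[s sF ->]; have /andP[ss so] := aF s sF.
  rewrite /inc_subseq (sorted_filter ltn_trans) // andbT subseq_filter filter_all.
  exact: subseq_trans (filter_subseq _ _) ss.
- by rewrite -filter_flatten filter_uniq.
Qed.

Lemma inc_family_map k w (F : seq (seq nat)) (f : nat -> nat) : injective f ->
  (forall s, s \in F -> {in s &, {homo f : x y / x < y}}) ->
  inc_family k w F -> inc_family k (map f w) (map (map f) F).
Proof.
move=> injf mf /and3P[szF /allP aF UF]; apply/and3P; split.
- by rewrite size_map.
- apply/allP => _ /mapP[s sF ->]; have /andP[ss so] := aF s sF.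
  by rewrite /inc_subseq map_subseq // (homo_sorted_in (mf s sF) (allss s) so).
- by rewrite -map_flatten map_inj_uniq.
Qed.

Lemma inc_family_subseq k w w' F : subseq w w' -> inc_family k w F -> inc_family k w' F.
Proof.
move=> ww' /and3P[szF /allP aF UF]; rewrite /inc_family szF UF andbT.
by apply/allP => s /aF /andP[ss so]; rewrite /inc_subseq so (subseq_trans ss ww').
Qed.

Lemma all_inc_subseq_swap (F : seq (seq nat)) u v a b :
  uniq (u ++ a :: b :: v) -> ~~ has (fun s => (a \in s) && (b \in s)) F ->
  all (inc_subseq (u ++ a :: b :: v)) F -> all (inc_subseq (u ++ b :: a :: v)) F.
Proof.
move=> U /hasPn nF /allP aF; apply/allP => s sF.
have /andP[ss so] := aF s sF; rewrite /inc_subseq so andbT.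
exact: subseq_swap (nF s sF).
Qed.

Lemma all_inc_subseq_swap_notin (F : seq (seq nat)) u v a b :
  uniq (u ++ a :: b :: v) -> a \notin flatten F ->
  all (inc_subseq (u ++ a :: b :: v)) F -> all (inc_subseq (u ++ b :: a :: v)) F.
Proof.
move=> U aF; apply: all_inc_subseq_swap => //; apply/hasPn => s sF.
by apply: contra aF => /andP[as_ _]; apply/flattenP; exists s.
Qed.

Lemma inc_family_swap k u v a b F :
  uniq (u ++ a :: b :: v) -> ~~ has (fun s => (a \in s) && (b \in s)) F ->
  inc_family k (u ++ a :: b :: v) F -> inc_family k (u ++ b :: a :: v) F.
Proof.
move=> U nF /and3P[szF aF UF].
by rewrite /inc_family szF UF (all_inc_subseq_swap U nF aF).
Qed.

Lemma inc_family_pick k w (P F : seq (seq nat)) s : s \in F -> inc_family k w (P ++ F) ->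
  exists R, [/\ inc_family k w (P ++ s :: R),
    size (flatten (P ++ F)) = size (flatten (P ++ s :: R)) & {subset R <= F}].
Proof.
move=> sF fF; have pF : perm_eq (P ++ F) (P ++ s :: rem s F) by rewrite perm_cat2l perm_to_rem.
exists (rem s F); split; first by rewrite -(inc_family_perm _ _ pF).
  exact/perm_size/perm_flatten.
by move=> t /mem_rem.
Qed.

Lemma inc_family_exchange k w w' (s0 s1 s0' s1' : seq nat) R :
  inc_family k w [:: s0, s1 & R] -> perm_eq (s0' ++ s1') (s0 ++ s1) ->
  all (inc_subseq w') [:: s0', s1' & R] ->
  has_inc_family k w' (size (flatten [:: s0, s1 & R])).
Proof.
move=> /and3P[szF _ UF] p01 aF'.
have pF : perm_eq (flatten [:: s0', s1' & R]) (flatten [:: s0, s1 & R]).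
  by rewrite /= !catA perm_cat2r.
exists [:: s0', s1' & R]; last exact: perm_size pF.
by rewrite /inc_family szF aF' (perm_uniq pF).
Qed.

Lemma inc_family_replace k w w' (s s' : seq nat) a b R :
  inc_family k w (s :: R) -> b \notin flatten (s :: R) -> perm_eq (a :: s') (b :: s) ->
  all (inc_subseq w') (s' :: R) -> has_inc_family k w' (size (flatten (s :: R))).
Proof.
move=> /and3P[/= szF _ UF] /= bF ps /= aF'; exists (s' :: R); last first.
  by have [e] := perm_size ps; rewrite /= !size_cat e.
have : uniq (a :: s' ++ flatten R).
  rewrite (perm_uniq (_ : perm_eq _ (b :: s ++ flatten R))); first exact/andP.
  by rewrite -!cat_cons perm_cat2r.
by case/andP=> _ Us'; rewrite /inc_family /= szF aF'.
Qed.

(** * Knuth equivalence *)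

Inductive knuth_step : seq nat -> seq nat -> Prop :=
| KnuthYXZ u v x y z : x < y -> y < z ->
    knuth_step (u ++ y :: x :: z :: v) (u ++ y :: z :: x :: v)
| KnuthXZY u v x y z : x < y -> y < z ->
    knuth_step (u ++ x :: z :: y :: v) (u ++ z :: x :: y :: v).

Definition knuth_eq : seq nat -> seq nat -> Prop := clos_refl_sym_trans _ knuth_step.

Lemma knuth_eq_trans w2 w1 w3 : knuth_eq w1 w2 -> knuth_eq w2 w3 -> knuth_eq w1 w3.
Proof. exact: rst_trans. Qed.

Lemma knuth_stepE w1 w2 : knuth_step w1 w2 ->
  exists u v x z, [/\ x < z, w1 = u ++ x :: z :: v & w2 = u ++ z :: x :: v].
Proof.
case=> u v x y z xy yz; last by exists u, (y :: v), x, z; rewrite (ltn_trans xy yz).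
by exists (u ++ [:: y]), v, x, z; rewrite (ltn_trans xy yz) -!catA.
Qed.

Lemma knuth_step_perm w1 w2 : knuth_step w1 w2 -> perm_eq w1 w2.
Proof.
move=> /knuth_stepE[u [v [x [z [_ -> ->]]]]].
by rewrite perm_cat2l -(cat1s x) -(cat1s z) perm_catCA.
Qed.

(* A member A x z B is re-paired with the member C y D, if any, into C y z B and A x D;
   otherwise y takes the place of x. *)
Lemma knuth_yxz_conflict k u v x y z F : x < y -> y < z ->
  uniq (u ++ y :: x :: z :: v) -> inc_family k (u ++ y :: x :: z :: v) F ->
  has (fun s => (x \in s) && (z \in s)) F ->
  has_inc_family k (u ++ y :: z :: x :: v) (size (flatten F)).
Proof.
move=> xy yz U fF /hasP[s0 s0F /andP[xs0 zs0]].
have [F1 [{}fF -> _]] := inc_family_pick (P := [::]) s0F fF.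
have /and3P[_ /= /andP[/andP[s0w s0so] aF1] UF] := fF.
have ys0 : y \notin s0.
  apply: contraL xy => ys0; rewrite -leqNgt ltnW //.
  exact: (sorted_subseq_lt U s0w s0so ys0 xs0 (mem_head _ _)).
have [A [B [Au Bv Es0]]] := subseq_window (m := [:: y; x; z]) U s0w.
rewrite /= (negPf ys0) xs0 zs0 /= in Es0; subst s0.
move: s0so; rewrite sorted_cat_cons /= => /andP[sAx /andP[_ pzB]].
have xF1 : x \notin flatten F1 by apply: notin_uniq_cat UF _; rewrite mem_cat mem_head orbT.
have aF1' : all (inc_subseq (u ++ y :: z :: x :: v)) F1.
  have eu w : u ++ y :: w = (u ++ [:: y]) ++ w by rewrite -catA.
  by rewrite eu; apply: all_inc_subseq_swap_notin xF1 _; rewrite -?eu.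
have [/flattenP[s1 s1F1 ys1] | yF1] := boolP (y \in flatten F1); last first.
  apply: (inc_family_replace (a := x) (b := y) (s' := A ++ y :: z :: B) fF).
  - by rewrite /= mem_cat negb_or ys0.
  - by apply/seq.permP => p; rewrite /= !count_cat /=; ring.
  rewrite /= aF1' // andbT /inc_subseq sorted_cat_cons /= yz pzB (sorted_rcons_lt sAx xy).
  by rewrite andbT cat_subseq // !subseq_cons2 (subseq_trans Bv (subseq_cons _ _)).
have [R [{}fF -> RF1]] := inc_family_pick (P := [:: A ++ x :: z :: B]) s1F1 fF.
have /and3P[_ /= /and3P[_ /andP[s1w s1so] _] UF'] := fF.
have [xs1 zs1] : x \notin s1 /\ z \notin s1.
  have ns1 t : t \in A ++ x :: z :: B -> t \notin s1.
    by move/(notin_uniq_cat UF'); rewrite mem_cat negb_or => /andP[].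
  by rewrite !ns1 // mem_cat !in_cons eqxx ?orbT.
have [C [D [Cu Dv Es1]]] := subseq_window (m := [:: y; x; z]) U s1w.
rewrite /= ys1 (negPf xs1) (negPf zs1) /= in Es1; subst s1.
move: s1so; rewrite sorted_cat_cons /= => /andP[sCy pyD].
apply: (inc_family_exchange (s0' := C ++ y :: z :: B) (s1' := A ++ x :: D) fF).
  by apply/seq.permP => p; rewrite !count_cat /=; ring.
rewrite /= /inc_subseq !sorted_cat_cons /= sCy yz pzB sAx (path_le ltn_trans xy pyD) /= !andbT.
apply/and3P; split.
- by rewrite cat_subseq // !subseq_cons2 (subseq_trans Bv (subseq_cons _ _)).
- by rewrite cat_subseq // (subseq_trans _ (suffix_subseq [:: y; z] _)) ?subseq_cons2.
- by apply/allP => s /RF1 sF1; apply: (allP aF1').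
Qed.

(* Here the new members are A x y D and C z B, or A x y B if y is unused. *)
Lemma knuth_xzy_conflict k u v x y z F : x < y -> y < z ->
  uniq (u ++ x :: z :: y :: v) -> inc_family k (u ++ x :: z :: y :: v) F ->
  has (fun s => (x \in s) && (z \in s)) F ->
  has_inc_family k (u ++ z :: x :: y :: v) (size (flatten F)).
Proof.
move=> xy yz U fF /hasP[s0 s0F /andP[xs0 zs0]].
have [F1 [{}fF -> _]] := inc_family_pick (P := [::]) s0F fF.
have /and3P[_ /= /andP[/andP[s0w s0so] aF1] UF] := fF.
have ys0 : y \notin s0.
  have Uz : uniq ((u ++ [:: x]) ++ z :: y :: v) by rewrite -catA.
  apply: contraL yz => ys0; rewrite -leqNgt ltnW //.
  by apply: (sorted_subseq_lt Uz _ s0so zs0 ys0 (mem_head _ _)); rewrite -catA.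
have [A [B [Au Bv Es0]]] := subseq_window (m := [:: x; z; y]) U s0w.
rewrite /= xs0 zs0 (negPf ys0) /= in Es0; subst s0.
move: s0so; rewrite sorted_cat_cons /= => /andP[sAx /andP[_ pzB]].
have xF1 : x \notin flatten F1 by apply: notin_uniq_cat UF _; rewrite mem_cat mem_head orbT.
have aF1' := all_inc_subseq_swap_notin U xF1 aF1.
have Axy D : subseq D v -> path ltn y D ->
    inc_subseq (u ++ z :: x :: y :: v) (A ++ x :: y :: D).
  move=> Dv pyD; rewrite /inc_subseq sorted_cat_cons /= sAx xy pyD.
  rewrite cat_subseq //; apply: (subseq_trans _ (suffix_subseq [:: z] _)).
  by rewrite !subseq_cons2.
have [/flattenP[s1 s1F1 ys1] | yF1] := boolP (y \in flatten F1); last first.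
  apply: (inc_family_replace (a := z) (b := y) (s' := A ++ x :: y :: B) fF).
  - by rewrite /= mem_cat negb_or ys0.
  - by apply/seq.permP => p; rewrite /= !count_cat /=; ring.
  - by rewrite /= aF1' Axy // (path_le ltn_trans yz pzB).
have [R [{}fF -> RF1]] := inc_family_pick (P := [:: A ++ x :: z :: B]) s1F1 fF.
have /and3P[_ /= /and3P[_ /andP[s1w s1so] _] UF'] := fF.
have [xs1 zs1] : x \notin s1 /\ z \notin s1.
  have ns1 t : t \in A ++ x :: z :: B -> t \notin s1.
    by move/(notin_uniq_cat UF'); rewrite mem_cat negb_or => /andP[].
  by rewrite !ns1 // mem_cat !in_cons eqxx ?orbT.
have [C [D [Cu Dv Es1]]] := subseq_window (m := [:: x; z; y]) U s1w.
rewrite /= (negPf xs1) (negPf zs1) ys1 /= in Es1; subst s1.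
move: s1so; rewrite sorted_cat_cons /= => /andP[sCy pyD].
apply: (inc_family_exchange (s0' := A ++ x :: y :: D) (s1' := C ++ z :: B) fF).
  by apply/seq.permP => p; rewrite !count_cat /=; ring.
rewrite /= Axy // /inc_subseq sorted_cat_cons /= (sorted_rcons_lt sCy yz) pzB /=.
have -> : subseq (C ++ z :: B) (u ++ z :: x :: y :: v).
  by rewrite cat_subseq // subseq_cons2 (subseq_trans Bv (suffix_subseq [:: x; y] _)).
by apply/allP => s /RF1 sF1; apply: (allP aF1').
Qed.

Lemma knuth_step_family k w1 w2 m : knuth_step w1 w2 -> uniq w1 ->
  has_inc_family k w1 m <-> has_inc_family k w2 m.
Proof.
move=> ks U1; split=> [[F fF <-] | [F fF <-]].
  move: U1 fF; case: ks => u v x y z xy yz U1 fF.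
  - have [|noxz] := boolP (has (fun s => (x \in s) && (z \in s)) F).
      exact: knuth_yxz_conflict.
    have eu w : u ++ y :: w = (u ++ [:: y]) ++ w by rewrite -catA.
    by exists F => //; rewrite eu; apply: inc_family_swap; rewrite -?eu.
  - have [|noxz] := boolP (has (fun s => (x \in s) && (z \in s)) F).
      exact: knuth_xzy_conflict.
    by exists F => //; apply: inc_family_swap.
exists F => //; have U2 : uniq w2 by rewrite -(perm_uniq (knuth_step_perm ks)).
move: ks U2 fF => /knuth_stepE[u [v [x [z [xz -> ->]]]]] U2 fF.
have /and3P[_ /allP aF _] := fF.
apply: (inc_family_swap U2 _ fF); apply/hasPn => s sF; apply/negP => /andP[zs xs].
have /andP[ss so] := aF s sF.
by have := sorted_subseq_lt U2 ss so zs xs (mem_head _ _); rewrite ltnNge ltnW.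
Qed.

Lemma knuth_eq_perm w1 w2 : knuth_eq w1 w2 -> perm_eq w1 w2.
Proof.
elim=> [a b /knuth_step_perm // | a // | a b _ | a b c _ pab _ pbc].
  by rewrite perm_sym.
exact: perm_trans pab pbc.
Qed.

Lemma knuth_eq_family k w1 w2 m : knuth_eq w1 w2 -> uniq w1 ->
  has_inc_family k w1 m <-> has_inc_family k w2 m.
Proof.
elim=> [a b kab | a // | a b kab IH Ub | a b c kab IHab _ IHbc Ua].
- exact: knuth_step_family.
- by symmetry; apply: IH; rewrite (perm_uniq (knuth_eq_perm kab)).
- by apply: iff_trans (IHab Ua) (IHbc _); rewrite -(perm_uniq (knuth_eq_perm kab)).
Qed.

Lemma knuth_step_cat a b w1 w2 : knuth_step w1 w2 -> knuth_step (a ++ w1 ++ b) (a ++ w2 ++ b).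
Proof.
by case=> u v x y z xy yz; rewrite -!catA /= !catA; constructor.
Qed.

Lemma knuth_eq_cat a b w1 w2 : knuth_eq w1 w2 -> knuth_eq (a ++ w1 ++ b) (a ++ w2 ++ b).
Proof.
elim=> [x y kxy | x | x y _ IH | x y z _ IHxy _ IHyz].
- exact/rst_step/knuth_step_cat.
- exact: rst_refl.
- exact: rst_sym.
- exact: rst_trans IHxy IHyz.
Qed.

(** * RSK insertion *)

Lemma knuth_eq_small_past_run (q r : seq nat) h x :
  sorted ltn (h :: q) -> x < h -> knuth_eq (h :: q ++ x :: r) (h :: x :: q ++ r).
Proof.
elim: q h => [|b q IH] h /=; first by move=> _ _; apply: rst_refl.
move=> /andP[hb sbq] xh.
have := knuth_eq_cat [:: h] [::] (IH b sbq (ltn_trans xh hb)); rewrite /= !cats0 => K.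
by apply: knuth_eq_trans K _; apply/rst_sym/rst_step; apply: (KnuthYXZ [::] (q ++ r) xh hb).
Qed.

Lemma knuth_eq_big_past_run (R : seq nat) y m t :
  sorted ltn (rcons R m) -> m < y -> knuth_eq (R ++ y :: m :: t) (y :: R ++ m :: t).
Proof.
elim/last_ind: R m t => [|R a IH] m t; first by move=> _ _; apply: rst_refl.
move=> sRam my; have /andP[sRa am] : sorted ltn (rcons R a) && (a < m).
  by move: sRam; rewrite -[rcons _ m]cats1 -cats1 -catA /= sorted_cat_cons /= andbT cats1.
rewrite !cat_rcons.
apply: knuth_eq_trans (IH a (m :: t) sRa (ltn_trans am my)).
exact/rst_step/KnuthXZY.
Qed.

Lemma take_find_lt (c : seq nat) y : y \notin c ->
  all (fun r => r < y) (take (find (fun z => y < z) c) c).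
Proof.
move=> yc; apply/allP => r /(nthP 0) [j].
rewrite size_take; set i := find _ c => ji <-.
have ji' : j < i.
  by move: ji; case: ifP => // /negbT; rewrite -leqNgt => h1 h; exact: leq_trans h h1.
rewrite nth_take //.
have := before_find 0 ji'; rewrite -/i => /negbT; rewrite -leqNgt leq_eqVlt => /orP[/eqP e|] //.
by move: yc; rewrite -e mem_nth // (leq_trans ji' (find_size _ _)).
Qed.

Lemma knuth_eq_row_bump (r : seq nat) x : sorted ltn r -> x \notin r ->
  find (fun y => x < y) r < size r ->
  knuth_eq (r ++ [:: x])
    (nth 0 r (find (fun y => x < y) r) :: set_nth 0 r (find (fun y => x < y) r) x).
Proof.
move=> sr xr; set i := find _ r => ir.
have xy : x < nth 0 r i by apply: (nth_find 0 (a := fun y => x < y)); rewrite has_find.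
have Er : r = take i r ++ nth 0 r i :: drop i.+1 r by rewrite -(drop_nth 0 ir) cat_take_drop.
have sy : sorted ltn (nth 0 r i :: drop i.+1 r) by rewrite -(drop_nth 0 ir) drop_sorted.
have sR1x := sorted_rcons_all (take_sorted i sr) (take_find_lt xr).
rewrite set_nthE ir.
move: sy xy sR1x; move: (nth 0 r i) (take i r) (drop i.+1 r) Er => y R1 R2 -> sy xy sR1x.
(* R1 y R2 x  ~  R1 y x R2  ~  y R1 x R2 *)
rewrite -catA /=; apply: (knuth_eq_trans (w2 := R1 ++ y :: x :: R2)).
  by have := knuth_eq_cat R1 [::] (knuth_eq_small_past_run [::] sy xy); rewrite !cats0.
exact: knuth_eq_big_past_run sR1x xy.
Qed.

Definition reading (T : seq (seq nat)) : seq nat := flatten (rev T).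

Lemma reading_cons (r : seq nat) T : reading (r :: T) = reading T ++ r.
Proof. by rewrite /reading rev_cons flatten_rcons. Qed.

Lemma perm_reading T : perm_eq (reading T) (flatten T).
Proof. by apply: perm_flatten; apply/seq.permP => p; rewrite count_rev. Qed.

Lemma knuth_eq_rsk_insert T x : all (sorted ltn) T -> uniq (reading T ++ [:: x]) ->
  knuth_eq (reading T ++ [:: x]) (reading (rsk_insert T x)).
Proof.
elim: T x => [|r T IH] x /=; first by move=> _ _; apply: rst_refl.
move=> /andP[sr sT]; rewrite reading_cons /row_bump -catA => U.
case: ifP => ir /=; last by rewrite reading_cons cats1; apply: rst_refl.
rewrite reading_cons; set y := nth 0 r _; set r' := set_nth 0 r _ x.
have xr : x \notin r.
  have : uniq (r ++ [:: x]) := subseq_uniq (suffix_subseq (reading T) _) U.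
  by rewrite cats1 rcons_uniq => /andP[].
apply: (knuth_eq_trans (w2 := reading T ++ y :: r')).
  by have := knuth_eq_cat (reading T) [::] (knuth_eq_row_bump sr xr ir); rewrite !cats0.
rewrite -cat1s catA; apply: (knuth_eq_cat [::] r' (IH y sT _)).
apply: (subseq_uniq _ U); apply: cat_subseq; first exact: subseq_refl.
by rewrite sub1seq mem_cat mem_nth.
Qed.

Definition row_lt (r c : seq nat) : bool :=
  (size c <= size r) && all (fun j => nth 0 r j < nth 0 c j) (iota 0 (size c)).

Fixpoint is_tableau (T : seq (seq nat)) : bool :=
  match T with
  | [::] => true
  | r :: T' => [&& sorted ltn r, row_lt r (head [::] T') & is_tableau T']
  end.

Definition row_insert (c : seq nat) (y : nat) : seq nat :=
  if find (fun z => y < z) c < size c then set_nth 0 c (find (fun z => y < z) c) y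
  else rcons c y.

Lemma find_eq_size (T : Type) (a : pred T) s : (find a s < size s) = false -> find a s = size s.
Proof. by move=> h; apply/eqP; rewrite eqn_leq find_size leqNgt h. Qed.

Lemma tableau_sorted T : is_tableau T -> all (sorted ltn) T.
Proof. by elim: T => //= r T IH /and3P[-> _ /IH]. Qed.

Lemma head_rsk_insert T y : head [::] (rsk_insert T y) = row_insert (head [::] T) y.
Proof. by case: T => [|c T] //=; rewrite /row_bump /row_insert; case: ifP. Qed.

Lemma sorted_row_insert c y : sorted ltn c -> y \notin c -> sorted ltn (row_insert c y).
Proof.
move=> sc yc; have aT := take_find_lt yc; rewrite /row_insert.
set i := find _ c in aT *; case: ifP => iC.
  rewrite set_nthE iC sorted_cat_cons (sorted_rcons_all (take_sorted i sc) aT) /=.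
  have yci : y < nth 0 c i by apply: (nth_find 0 (a := fun z => y < z)); rewrite has_find.
  have := drop_sorted i sc; rewrite (drop_nth 0 iC) /=.
  by move=> h; apply: (path_le ltn_trans _ h); exact: yci.
have ei : i = size c := find_eq_size iC.
by move: aT; rewrite ei take_size => aT; exact: sorted_rcons_all.
Qed.

Lemma size_row_insert c y : size (row_insert c y) =
  if find (fun z => y < z) c < size c then size c else (size c).+1.
Proof.
rewrite /row_insert; case: ifP => iC; last by rewrite size_rcons.
by rewrite size_set_nth; apply/maxn_idPr.
Qed.

Lemma nth_row_insert c y j : j < size (row_insert c y) ->
  nth 0 (row_insert c y) j = if j == find (fun z => y < z) c then y else nth 0 c j.
Proof.
rewrite size_row_insert /row_insert; case: ifP => iC jS; first by rewrite nth_set_nth.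
have ei := find_eq_size iC.
rewrite nth_rcons ei; case: ltngtP => //.
by move=> h; move: jS; rewrite ltnS leqNgt h.
Qed.

Lemma row_ltP r c :
  reflect (size c <= size r /\ forall j, j < size c -> nth 0 r j < nth 0 c j) (row_lt r c).
Proof.
apply: (iffP andP) => [[h /allP a]|[h a]]; split => //.
- by move=> j jc; apply: a; rewrite mem_iota.
- by apply/allP => j; rewrite mem_iota => /andP[_ jc]; apply: a.
Qed.

Lemma row_lt_bump r c x : row_lt r c -> sorted ltn r -> sorted ltn c -> x \notin r ->
  find (fun z => x < z) r < size r ->
  nth 0 r (find (fun z => x < z) r) \notin c ->
  row_lt (set_nth 0 r (find (fun z => x < z) r) x)
    (row_insert c (nth 0 r (find (fun z => x < z) r))).
Proof.
move=> /row_ltP[scr ltrc] sr sc xr; set i := find _ r => ir; set y := nth 0 r i => yc.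
have xy : x < y by apply: (nth_find 0 (a := fun z => x < z)); rewrite has_find.
set i' := find (fun z => y < z) c.
have i'i : i' <= i.
  case: (ltnP i (size c)) => ic; last exact: (leq_trans (find_size _ _) ic).
  rewrite leqNgt; apply/negP => h; have := before_find 0 h; rewrite /= (ltrc i ic) //.
apply/row_ltP; split.
  rewrite size_row_insert size_set_nth (maxn_idPr ir) -/i'; case: ifP => // hi.
  have ei : i' = size c := find_eq_size hi.
  by rewrite -ei (leq_ltn_trans i'i ir).
move=> j js; rewrite nth_row_insert // nth_set_nth /= -/i'.
have jr : j < size r.
  move: js; rewrite size_row_insert -/i'; case: ifP => [_ h|hi h]; first exact: leq_trans h scr.
  have ei : i' = size c := find_eq_size hi.
  move: h; rewrite ltnS leq_eqVlt => /orP[/eqP ->|h]; last exact: leq_trans h scr.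
  by rewrite -ei (leq_ltn_trans i'i ir).
case: (j =P i') => [ji'|ji'].
  case: (j =P i) => [_|ji]; first exact: xy.
  have jlti : j < i by rewrite ltn_neqAle; apply/andP; split; [apply/eqP | rewrite ji'].
  exact: (sorted_ltn_nth ltn_trans 0 sr j i).
have jc : j < size c.
  move: js; rewrite size_row_insert -/i'; case: ifP => // hi.
  rewrite ltnS leq_eqVlt => /orP[/eqP e|//].
  have ei : i' = size c := find_eq_size hi.
  by case: ji'; rewrite ei.
case: (j =P i) => [ji|_]; last exact: ltrc.
by rewrite ji; apply: (ltn_trans xy); rewrite /y; apply: ltrc; rewrite -ji.
Qed.

Lemma rsk_insert_tableau T x : is_tableau T -> uniq (x :: flatten T) -> is_tableau (rsk_insert T x).
Proof.
elim: T x => [|r T IH] x /=; first by move=> _ _; rewrite /row_lt.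
move=> /and3P[sr rl vT] /andP[xrT UrT]; rewrite /row_bump.
have xr : x \notin r by move: xrT; rewrite mem_cat negb_or => /andP[].
have UT : uniq (flatten T) by move: UrT; rewrite cat_uniq => /and3P[].
have dis : forall t, t \in r -> t \notin flatten T by move=> t; apply: notin_uniq_cat.
case: ifP => iR /=.
  set y := nth 0 r _.
  have yr : y \in r by exact: mem_nth.
  apply/and3P; split.
  - by have := sorted_row_insert sr xr; rewrite /row_insert iR.
  - rewrite head_rsk_insert; apply: row_lt_bump => //.
    + by case: T vT {IH dis UrT xrT UT rl} => //= c T /and3P[].
    + case: T vT {IH UrT xrT UT rl} dis => //= c T _ dis.
      by apply/negP => yc; move: (dis y yr); rewrite mem_cat yc.
  - by apply: IH => //=; rewrite UT andbT dis.
apply/and3P; split => //.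
- by have := sorted_row_insert sr xr; rewrite /row_insert iR.
- move/row_ltP: rl => [h1 h2]; apply/row_ltP; split; first by rewrite size_rcons (leq_trans h1).
  by move=> j jc; rewrite nth_rcons (leq_trans jc h1); exact: h2.
Qed.

Lemma rsk_P_spec w : uniq w -> is_tableau (rsk_P w) /\ knuth_eq w (reading (rsk_P w)).
Proof.
elim/last_ind: w => [|w x IH]; first by move=> _; split => //; exact: rst_refl.
rewrite rcons_uniq => /andP[xw Uw]; have [vP kP] := IH Uw.
have pw := knuth_eq_perm kP.
rewrite /rsk_P foldl_rcons -/(rsk_P w); split.
  apply: rsk_insert_tableau => //=; rewrite -(perm_uniq (perm_reading _)) -(perm_uniq pw) Uw andbT.
  by rewrite -(perm_mem (perm_reading _)) -(perm_mem pw).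
apply: (knuth_eq_trans (w2 := reading (rsk_P w) ++ [:: x])).
  by have := knuth_eq_cat [::] [:: x] kP; rewrite /= cats1.
apply: knuth_eq_rsk_insert; first exact: tableau_sorted.
by rewrite cats1 rcons_uniq -(perm_uniq pw) -(perm_mem pw) xw Uw.
Qed.

(** * Greene's theorem *)

Definition shape_psum (k : nat) (T : seq (seq nat)) : nat := sumn (take k (map size T)).

Definition nonempty (r : seq nat) : bool := r != [::].

Definition first_column (T : seq (seq nat)) : seq nat := map (head 0) (filter nonempty T).

Lemma mem_subseq_flatten (X : seq (seq nat)) r : r \in X -> subseq r (flatten X).
Proof.
elim: X => //= c X IH; rewrite in_cons => /orP[/eqP ->|/IH h].
  exact: prefix_subseq.
by apply: (subseq_trans h); exact: suffix_subseq.
Qed.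

Lemma has_inc_family_rows T k : uniq (reading T) -> all (sorted ltn) T ->
  has_inc_family k (reading T) (shape_psum k T).
Proof.
move=> U aT; exists (take k T); last by rewrite size_flatten /shape map_take.
apply/and3P; split.
- by rewrite size_take; case: ifP => // /negbT; rewrite -leqNgt.
- apply/allP => r /mem_take rT; rewrite /inc_subseq (allP aT r rT) andbT.
  by apply: mem_subseq_flatten; rewrite mem_rev.
- have : uniq (flatten T) by rewrite -(perm_uniq (perm_reading T)).
  by rewrite -{1}(cat_take_drop k T) flatten_cat cat_uniq => /andP[].
Qed.

Lemma tableau_nil_rest T : is_tableau ([::] :: T) -> all (fun r => r == [::]) T.
Proof.
elim: T => //= c T IH /andP[/row_ltP[h _] v].
have c0 : c = [::] by case: c h v.
move: v; rewrite c0 /= => v; exact: IH.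
Qed.

Lemma count_nonempty_nil T : all (fun r => r == [::]) T -> count nonempty T = 0.
Proof. by elim: T => //= c T IH /andP[/eqP -> /IH ->]. Qed.

Lemma count_nonempty_take T k :
  is_tableau T -> count nonempty (take k T) = minn k (count nonempty T).
Proof.
elim: T k => [|r T IH] k /=; first by rewrite minn0.
case: k => [|k] /=; first by rewrite min0n.
case: (altP (r =P [::])) => [r0|rn] /= v.
  move: v; rewrite r0 => /tableau_nil_rest /count_nonempty_nil h.
  rewrite /nonempty eqxx /= !add0n h minn0.
  by apply/eqP; rewrite -leqn0 -h leq_count_subseq ?take_subseq.
move: v => /and3P[_ _ v]; rewrite /nonempty rn /= !add1n IH //.
by rewrite minnSS.
Qed.

Lemma shape_psum_behead k T :
  shape_psum k T = shape_psum k (map behead T) + count nonempty (take k T).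
Proof.
elim: T k => [|r T IH] [|k] //=; rewrite /shape_psum /= in IH *.
rewrite IH; case: r => //= a r; rewrite /nonempty /=; lia.
Qed.

Lemma size_flatten_behead T : size (flatten T) = size (flatten (map behead T)) + count nonempty T.
Proof.
elim: T => //= r T IH; rewrite !size_cat IH; case: r => //= a r; rewrite /nonempty /=; lia.
Qed.

Lemma tableau_behead T : is_tableau T -> is_tableau (map behead T).
Proof.
elim: T => //= r T IH /and3P[sr rl vT]; apply/and3P; split.
- by rewrite -drop1; exact: drop_sorted.
- case: T rl vT {IH} => [|c T] //= /row_ltP[h1 h2] _; apply/row_ltP; split.
    by rewrite !size_behead; lia.
  by move=> j; rewrite size_behead !nth_behead => jc; apply: h2; lia.
- exact: IH.
Qed.

Lemma flatten_rows_eq T r1 r2 (a : nat) : uniq (flatten T) -> r1 \in T -> r2 \in T ->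
  a \in r1 -> a \in r2 -> r1 = r2.
Proof.
elim: T => //= c T IH; rewrite cat_uniq => /and3P[_ /hasPn dj UT].
rewrite !in_cons => /orP[/eqP->|h1] /orP[/eqP->|h2] a1 a2 //.
- have : a \in flatten T by apply/flattenP; exists r2.
  by move=> aT; move: (dj a aT); rewrite /= a1.
- have : a \in flatten T by apply/flattenP; exists r1.
  by move=> aT; move: (dj a aT); rewrite /= a2.
- exact: IH.
Qed.

Lemma reading_behead T : uniq (reading T) ->
  reading (map behead T) = [seq a <- reading T | a \notin first_column T].
Proof.
move=> U; have UT : uniq (flatten T) by rewrite -(perm_uniq (perm_reading T)).
rewrite /reading filter_flatten map_rev; congr (flatten (rev _)).
apply/eq_in_map => r rT; case: r rT => [|h r'] //= rT.
have hH : h \in first_column T by apply/mapP; exists (h :: r') => //; rewrite mem_filter rT.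
rewrite hH /=; apply/esym/all_filterP/allP => a ar'; apply/negP => /mapP[r2].
rewrite mem_filter => /andP[r2n r2T] ah.
have ar2 : a \in r2 by case: r2 r2n {r2T} ah => //= b r2 _ ->; exact: mem_head.
have ahr : a \in h :: r' by rewrite in_cons ar' orbT.
have e := flatten_rows_eq UT rT r2T ahr ar2.
have Ur : uniq (h :: r') by apply: (subseq_uniq (mem_subseq_flatten rT) UT).
move: Ur; rewrite /= => /andP[hr' _]; move: ah; rewrite -e /= => ah.
by move: hr'; rewrite -ah ar'.
Qed.

Lemma first_column_nil T : all (fun r => r == [::]) T -> first_column T = [::].
Proof. by elim: T => //= c T IH /andP[/eqP -> /IH]; rewrite /first_column /=. Qed.

Lemma first_column_cons r T :
  first_column (r :: T) = if r == [::] then first_column T else head 0 r :: first_column T.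
Proof. by rewrite /first_column /= /nonempty; case: eqP. Qed.

Lemma first_column_gt T r : is_tableau (r :: T) -> r != [::] ->
  all (fun h => head 0 r < h) (first_column T).
Proof.
elim: T r => [|c T IH] r; first by rewrite /first_column.
move=> /= /and3P[sr /row_ltP[h1 h2] vcT] rn; rewrite first_column_cons.
case: eqP => [c0|/eqP cn].
  by move: vcT; rewrite c0 => /tableau_nil_rest /first_column_nil ->.
have rc : head 0 r < head 0 c.
  by rewrite -!nth0; apply: h2; case: c cn {h1 vcT}.
rewrite /= rc /=; apply/allP => h hT.
by apply: (ltn_trans rc); exact: (allP (IH c vcT cn) h hT).
Qed.

Lemma mem_first_column T a : a \in first_column T -> a \in flatten T.
Proof.
move=> /mapP[r]; rewrite mem_filter => /andP[rn rT] ->.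
apply/flattenP; exists r => //; case: r rn {rT} => //= b r _; exact: mem_head.
Qed.

Lemma count_first_column_le1 T s : is_tableau T -> uniq (reading T) ->
  subseq s (reading T) -> sorted ltn s ->
  count (fun a => a \in first_column T) s <= 1.
Proof.
elim: T s => [|r T IH] s.
  by move=> _ _ S _; have /eqP -> : s == [::] by rewrite -subseq0; exact: S.
move=> v U S so; move: (v) => /= /and3P[sr rl vT].
rewrite reading_cons in U S.
have UT : uniq (reading T) by move: U; rewrite cat_uniq => /and3P[].
have Ur : uniq r by move: U; rewrite cat_uniq => /and3P[].
have dis : forall a, a \in r -> a \notin reading T.
  by move=> a ar; apply: (notin_uniq_cat (a := r)); first rewrite uniq_catC.
have [s1 [s2 [S1 S2 Es]]] := subseq_window (m := [::]) U S; move: Es => /= Es; subst s.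
move: so; rewrite sorted_pairwise; last exact: ltn_trans.
rewrite pairwise_cat => /and3P[/allrelP ar p1 p2].
have so1 : sorted ltn s1 by rewrite sorted_pairwise //; exact: ltn_trans.
have IH1 := IH s1 vT UT S1 so1.
rewrite count_cat first_column_cons.
case: eqP => [r0|/eqP rn].
  by move: S2; rewrite r0 subseq0 => /eqP ->; rewrite addn0.
have hr : head 0 r \in r by case: (r) rn => //= b r' _; exact: mem_head.
set h := head 0 r in hr *.
have -> : count (fun a => a \in h :: first_column T) s1 = count (fun a => a \in first_column T) s1.
  apply: eq_in_count => a as1; rewrite in_cons.
  have : a != h by apply/eqP => ah; move: (dis h hr); rewrite -ah (mem_subseq S1 as1).
  by move/negbTE => ->.
have -> : count (fun a => a \in h :: first_column T) s2 = count (pred1 h) s2.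
  apply: eq_in_count => a as2; rewrite in_cons /=.
  have : a \notin first_column T.
    apply/negP => /mem_first_column; rewrite -(perm_mem (perm_reading T)) => aT.
    by move: (dis a (mem_subseq S2 as2)); rewrite aT.
  by move/negbTE => ->; rewrite orbF.
have Us2 : uniq s2 := subseq_uniq S2 Ur.
case: (boolP (h \in s2)) => hs2.
  have -> : count (fun a => a \in first_column T) s1 = 0.
    apply/eqP; rewrite -leqn0 leqNgt -has_count; apply/hasPn => a as1; apply/negP => aH.
    have := allP (first_column_gt v rn) a aH; rewrite -/h => ha.
    by have := ltn_trans ha (ar a h as1 hs2); rewrite ltnn.
  by rewrite add0n (count_uniq_mem _ Us2) hs2.
by move/count_memPn: hs2 => ->; rewrite addn0.
Qed.

Lemma count_flatten_le1 (a : pred nat) (F : seq (seq nat)) :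
  (forall s, s \in F -> count a s <= 1) -> count a (flatten F) <= size F.
Proof.
elim: F => //= s F IH H; rewrite count_cat -add1n.
apply: leq_add; first by apply: H; exact: mem_head.
by apply: IH => t tF; apply: H; rewrite in_cons tF orbT.
Qed.

Lemma count_uniq_le (hs s : seq nat) : uniq s -> count (fun x => x \in hs) s <= size hs.
Proof.
move=> Us; rewrite -size_filter; apply: uniq_leq_size; first exact: filter_uniq.
by move=> x; rewrite mem_filter => /andP[].
Qed.

Lemma inc_family_no_rows k T F : count nonempty T = 0 ->
  inc_family k (reading T) F -> size (flatten F) = 0.
Proof.
move=> cT; have -> : reading T = [::].
  by elim: T cT => //= r T IH; rewrite reading_cons /nonempty; case: r => //= /IH ->.
move=> /and3P[_ /allP aF _].
case E: (flatten F) => [//|a t]; have : a \in flatten F by rewrite E mem_head.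
by case/flattenP=> s /aF /andP[]; rewrite subseq0 => /eqP ->.
Qed.

Lemma count_first_column_inc_family k T F : is_tableau T -> uniq (reading T) ->
  inc_family k (reading T) F ->
  count (mem (first_column T)) (flatten F) <= count nonempty (take k T).
Proof.
move=> v U /and3P[szF /allP aF UF]; rewrite count_nonempty_take // leq_min; apply/andP; split.
  apply: (leq_trans _ szF); apply: count_flatten_le1 => s sF.
  by have /andP[ss so] := aF s sF; exact: count_first_column_le1.
have -> : count nonempty T = size (first_column T) by rewrite /first_column size_map size_filter.
exact: count_uniq_le.
Qed.

Lemma inc_family_tableau_le_aux n T k F : size (flatten T) <= n -> is_tableau T ->
  uniq (reading T) -> inc_family k (reading T) F -> size (flatten F) <= shape_psum k T.
Proof.
elim: n T F => [|n IH] T F sT v U fF; have [cT|cT] := posnP (count nonempty T);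
  rewrite ?(inc_family_no_rows cT fF) //; first by move: sT; rewrite size_flatten_behead; lia.
set P := fun a => a \notin first_column T.
rewrite -(count_predC P (flatten F)) (shape_psum_behead k T) -size_filter filter_flatten.
apply: leq_add; last first.
  rewrite (eq_count (a2 := mem (first_column T))) ?count_first_column_inc_family //.
  by move=> a; rewrite /= negbK.
have UT' : uniq (reading (map behead T)) by rewrite reading_behead // filter_uniq.
apply: IH (tableau_behead v) UT' _; first by move: sT; rewrite (size_flatten_behead T); lia.
by rewrite reading_behead //; apply: inc_family_filter.
Qed.

Lemma inc_family_tableau_le T k F : is_tableau T -> uniq (reading T) ->
  inc_family k (reading T) F -> size (flatten F) <= shape_psum k T.
Proof. exact: (inc_family_tableau_le_aux (leqnn _)). Qed.

Theorem greene_rsk_P w k : uniq w ->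
  has_inc_family k w (shape_psum k (rsk_P w)) /\
  forall m, has_inc_family k w m -> m <= shape_psum k (rsk_P w).
Proof.
move=> Uw; have [vP kP] := rsk_P_spec Uw.
have Ur : uniq (reading (rsk_P w)) by rewrite -(perm_uniq (knuth_eq_perm kP)).
split; first by apply/(knuth_eq_family _ _ kP Uw)/has_inc_family_rows/tableau_sorted.
by move=> m /(knuth_eq_family _ _ kP Uw) [F fF <-]; apply: inc_family_tableau_le fF.
Qed.

(** * Swapping adjacent letters *)

Definition swap_adj (k a : nat) : nat :=
  if a == k then k.+1 else if a == k.+1 then k else a.

Lemma swap_adjK k : involutive (swap_adj k).
Proof.
move=> a; rewrite /swap_adj; case: (a =P k) => [->|ak]; first by rewrite eqxx gtn_eqF ?eqxx.
case: (a =P k.+1) => [->|ak1]; first by rewrite eqxx.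
by move/eqP/negPf: ak => ->; move/eqP/negPf: ak1 => ->.
Qed.

Lemma swap_adj_inj k : injective (swap_adj k).
Proof. exact: inv_inj (swap_adjK k). Qed.

Lemma swap_adj_lt k x y : x < y -> ~~ ((x == k) && (y == k.+1)) -> swap_adj k x < swap_adj k y.
Proof. by rewrite /swap_adj; do ![case: eqP => ?] => //=; lia. Qed.

Lemma map_swap_adj_split (k : nat) u v :
  map (swap_adj k) (u ++ k :: v) = map (swap_adj k) u ++ k.+1 :: map (swap_adj k) v.
Proof. by rewrite map_cat /= /swap_adj eqxx. Qed.

(* In the swapped word k+1 precedes k, so swapping back is monotone on every member. *)
Lemma has_inc_family_swap_adj j k u v m : uniq (u ++ k :: v) -> k.+1 \in v ->
  has_inc_family j (map (swap_adj k) (u ++ k :: v)) m -> has_inc_family j (u ++ k :: v) m.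
Proof.
move=> U k1v [F fF <-]; have /and3P[_ /allP aF _] := fF.
exists (map (map (swap_adj k)) F); last by rewrite -map_flatten size_map.
rewrite -{1}(mapK (@swap_adjK k) (u ++ k :: v)).
apply: inc_family_map fF => [|s sF x y xs ys xy]; first exact: swap_adj_inj.
apply: swap_adj_lt xy _; apply/negP => /andP[/eqP xk /eqP yk]; subst x y.
have U' : uniq (map (swap_adj k) (u ++ k :: v)) by rewrite map_inj_uniq //; apply: swap_adj_inj.
have /andP[ss so] := aF s sF.
rewrite map_swap_adj_split in U' ss.
have kv : k \in map (swap_adj k) v.
  by apply/mapP; exists k.+1 => //; rewrite /swap_adj gtn_eqF // eqxx.
by have := sorted_subseq_lt U' ss so ys xs kv; rewrite ltnNge leqnSn.
Qed.

Lemma inc_family_swap_adj_drop j k w F : uniq w -> inc_family j w F ->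
  exists2 G, inc_family j (map (swap_adj k) w) G & size (flatten F) <= size (flatten G) + 1.
Proof.
move=> Uw fF; have /and3P[_ _ UF] := fF.
exists (map (map (swap_adj k)) (map (filter (predC1 k)) F)).
  apply: (inc_family_subseq (map_subseq _ (filter_subseq (predC1 k) w))).
  apply: inc_family_map (inc_family_filter _ fF) => [|_ /mapP[s _ ->]]; first exact: swap_adj_inj.
  by move=> x y /[!mem_filter] /andP[xk _] _ xy; apply: swap_adj_lt xy _; rewrite (negPf xk).
rewrite -map_flatten size_map -filter_flatten size_filter.
rewrite -[leqLHS](count_predC (predC1 k)) leq_add2l.
have -> : count (predC (predC1 k)) (flatten F) = count_mem k (flatten F).
  by apply: eq_count => a; rewrite /= negbK.
by rewrite count_uniq_mem // leq_b1.
Qed.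

Lemma shape_psum_swap_adj j k u v : uniq (u ++ k :: v) -> k.+1 \in v ->
  shape_psum j (rsk_P (map (swap_adj k) (u ++ k :: v))) <= shape_psum j (rsk_P (u ++ k :: v))
    <= shape_psum j (rsk_P (map (swap_adj k) (u ++ k :: v))) + 1.
Proof.
move=> U k1v; have U' : uniq (map (swap_adj k) (u ++ k :: v)).
  by rewrite map_inj_uniq //; apply: swap_adj_inj.
have [[F fF <-] ubw] := greene_rsk_P j U; have [gw' ubw'] := greene_rsk_P j U'.
apply/andP; split; first exact/ubw/(has_inc_family_swap_adj U k1v).
have [G fG FG] := inc_family_swap_adj_drop k U fF.
by apply: leq_trans FG _; rewrite leq_add2r; apply: ubw'; exists G.
Qed.

(** * Interlaced partitions *)

Definition shape_dist (N : nat) (a b : seq nat) : nat := \sum_(i < N) `|nth 0 a i - nth 0 b i|.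

Lemma shape_distC N a b : shape_dist N a b = shape_dist N b a.
Proof. by apply: eq_bigr => i _; rewrite distnC. Qed.

Lemma shape_distS N a b :
  shape_dist N.+1 a b = `|head 0 a - head 0 b| + shape_dist N (behead a) (behead b).
Proof.
rewrite /shape_dist big_ord_recl !nth0; congr (_ + _).
by apply: eq_bigr => i _; rewrite !nth_behead.
Qed.

Lemma sumn_takeS (a : seq nat) j : sumn (take j.+1 a) = head 0 a + sumn (take j (behead a)).
Proof. by case: a. Qed.

Lemma sorted_geq_behead (a : seq nat) :
  sorted geq a -> sorted geq (behead a) /\ head 0 (behead a) <= head 0 a.
Proof. by case: a => [|x [|y a]] //= /andP[yx ->]. Qed.

Lemma sumn_head (a : seq nat) : sumn a = head 0 a + sumn (behead a).
Proof. by case: a. Qed.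

(* The nonzero differences a_i - b_i are +1, -1, +1, ...; the defect sumn a - sumn b and the
   bound by the first part are what make the induction on N go through. *)
Lemma shape_dist_interlaced N a b : sorted geq a -> sorted geq b ->
  (forall j, sumn (take j b) <= sumn (take j a) <= sumn (take j b) + 1) ->
  shape_dist N a b ^ 2 + (sumn a - sumn b) <= 2 * sumn a /\ shape_dist N a b <= head 0 a.
Proof.
elim: N a b => [|N IH] a b sa sb H; first by rewrite /shape_dist big_ord0; split => //; lia.
have [sa' ha] := sorted_geq_behead sa; have [sb' hb] := sorted_geq_behead sb.
have /andP[h1 h2] := H 1; rewrite !sumn_takeS !take0 /= !addn0 in h1 h2.
have Hall := H (size a + size b); rewrite !take_oversize ?leq_addl ?leq_addr // in Hall.
have Ht j : sumn (take j (behead b)) + head 0 b <= sumn (take j (behead a)) + head 0 a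
           <= sumn (take j (behead b)) + head 0 b + 1.
  by have := H j.+1; rewrite !sumn_takeS (addnC (head 0 b)) (addnC (head 0 a)).
rewrite shape_distS (sumn_head a) (sumn_head b); rewrite (sumn_head a) (sumn_head b) in Hall.
have [eab | ltab] := eqVneq (head 0 a) (head 0 b).
  have [IH1 IH2] : shape_dist N (behead a) (behead b) ^ 2 + (sumn (behead a) - sumn (behead b))
      <= 2 * sumn (behead a) /\ shape_dist N (behead a) (behead b) <= head 0 (behead a).
    by apply: IH => // j; have := Ht j; rewrite eab; lia.
  rewrite eab distnn add0n; split; last by apply: leq_trans IH2 _; rewrite -eab.
  by move: IH1; move: (shape_dist _ _ _ ^ 2) => X; lia.
have eab : head 0 a = (head 0 b).+1 by lia.
have [IH1 IH2] : shape_dist N (behead b) (behead a) ^ 2 + (sumn (behead b) - sumn (behead a))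
    <= 2 * sumn (behead b) /\ shape_dist N (behead b) (behead a) <= head 0 (behead b).
  by apply: IH => // j; have := Ht j; rewrite eab; lia.
rewrite shape_distC in IH1 IH2; rewrite eab distnC distnS.
move: IH1 IH2 Hall; move: (shape_dist _ _ _) => D IH1 IH2 Hall.
have hD : D <= head 0 b := leq_trans IH2 hb.
split; last by lia.
have -> : (1 + D) ^ 2 = D ^ 2 + 2 * D + 1 by ring.
by move: IH1; move: (D ^ 2) => X; lia.
Qed.

Lemma tableau_shape_sorted T : is_tableau T -> sorted geq (map size T).
Proof.
elim: T => [|r [|c T] IH] //= /and3P[_ /row_ltP[h _] vT].
by rewrite h; apply: IH.
Qed.

Definition word_shape (w : seq nat) : seq nat := map size (rsk_P w).

Lemma sumn_word_shape w : uniq w -> sumn (word_shape w) = size w.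
Proof.
move=> U; have [_ kP] := rsk_P_spec U.
by rewrite (perm_size (knuth_eq_perm kP)) (perm_size (perm_reading _)) size_flatten.
Qed.

Lemma word_shape_dist_swap_adj_split k u v : uniq (u ++ k :: v) -> k.+1 \in v ->
  shape_dist (size (u ++ k :: v)) (word_shape (u ++ k :: v))
    (word_shape (map (swap_adj k) (u ++ k :: v))) ^ 2 <= 2 * size (u ++ k :: v).
Proof.
move=> U k1v; have U' : uniq (map (swap_adj k) (u ++ k :: v)).
  by rewrite map_inj_uniq //; apply: swap_adj_inj.
have [vP _] := rsk_P_spec U; have [vP' _] := rsk_P_spec U'.
have [+ _] := shape_dist_interlaced (size (u ++ k :: v))
  (tableau_shape_sorted vP) (tableau_shape_sorted vP') (fun j => shape_psum_swap_adj j U k1v).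
by rewrite -/(word_shape _) sumn_word_shape // => h; exact: leq_trans (leq_addr _ _) h.
Qed.

Lemma word_shape_dist_swap_adj k w : uniq w -> k \in w -> k.+1 \in w ->
  shape_dist (size w) (word_shape w) (word_shape (map (swap_adj k) w)) ^ 2 <= 2 * size w.
Proof.
move=> U kw; case/splitPr: kw U => u v U.
rewrite mem_cat in_cons gtn_eqF //= => /orP[k1u|k1v]; last exact: word_shape_dist_swap_adj_split.
case/splitPr: k1u U => u1 u2 U; set s := swap_adj k.
have ew : map s ((u1 ++ k.+1 :: u2) ++ k :: v) = map s u1 ++ k :: (map s u2 ++ k.+1 :: map s v).
  by rewrite /s !map_cat /= /swap_adj eqxx gtn_eqF // eqxx -catA.
have := @word_shape_dist_swap_adj_split k (map s u1) (map s u2 ++ k.+1 :: map s v).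
rewrite -ew (mapK (@swap_adjK k)) size_map shape_distC; apply.
  by rewrite map_inj_uniq //; apply: swap_adj_inj.
by rewrite mem_cat mem_head orbT.
Qed.

Lemma one_line_uniq n (pi : 'S_n) : uniq (one_line pi).
Proof. by rewrite /one_line map_inj_uniq ?enum_uniq // => x y /val_inj; exact: perm_inj. Qed.

Lemma mem_one_line n (pi : 'S_n) k : (k \in one_line pi) = (k < n).
Proof.
apply/mapP/idP => [[x _ ->]|kn]; first exact: ltn_ord.
by exists ((pi^-1)%g (Ordinal kn)); [rewrite mem_enum | rewrite permKV].
Qed.

Lemma size_one_line n (pi : 'S_n) : size (one_line pi) = n.
Proof. by rewrite /one_line size_map size_enum_ord. Qed.

Lemma one_line_left_mul_tperm n (pi : 'S_n) (i j : 'I_n) : val j = (val i).+1 ->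
  one_line (left_mul_tperm (i, j) pi) = map (swap_adj (val i)) (one_line pi).
Proof.
move=> ij; rewrite /one_line -map_comp; apply: eq_map => x /=; rewrite permM.
case: tpermP => [->|->|xi xj]; rewrite /swap_adj ?eqxx ?ij //.
  by rewrite gtn_eqF // eqxx.
have -> : (val (pi x) == val i) = false by apply/eqP => /val_inj.
by rewrite -ij; have -> : (val (pi x) == val j) = false by apply/eqP => /val_inj.
Qed.

Local Open Scope ring_scope.

Lemma normr_natrB (R : numDomainType) (x y : nat) : `|(x%:R - y%:R : R)| = `|x - y|%N%:R.
Proof. by rewrite natr_absz intr_norm rmorphB. Qed.

Lemma Delta_shape_dist (R : numDomainType) n a b :
  Delta R n a b = (shape_dist n a b)%:R / 2%:R.
Proof.
by rewrite /Delta /shape_dist natr_sum; congr (_ / _); apply: eq_bigr => i _; exact: normr_natrB.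
Qed.

Lemma Delta_triangle (R : numDomainType) n a b c : Delta R n a c <= Delta R n a b + Delta R n b c.
Proof.
rewrite /Delta -mulrDl; apply: ler_wpM2r; first by rewrite invr_ge0 ler0n.
by rewrite -big_split /=; apply: ler_sum => i _; exact: ler_distD.
Qed.

Lemma Delta_refl (R : numDomainType) n a : Delta R n a a = 0.
Proof. by rewrite /Delta big1 ?mul0r // => i _; rewrite subrr normr0. Qed.

Lemma half_le_sqrt_half (R : rcfType) n (D : nat) : (D ^ 2 <= 2 * n)%N ->
  (D%:R / 2%:R : R) <= Num.sqrt (n%:R / 2%:R).
Proof.
move=> h; have h2 : (D%:R ^+ 2 <= 2%:R * n%:R :> R) by rewrite -natrX -natrM ler_nat.
have p : (0 : R) <= D%:R / 2%:R by rewrite divr_ge0 // ler0n.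
rewrite -(ger0_norm p) -sqrtr_sqr ler_sqrt; last by rewrite divr_ge0 // ler0n.
rewrite expr_div_n; move: h2; move: (D%:R ^+ 2 : R) (n%:R : R) => X y hX.
rewrite expr2; lra.
Qed.

Lemma Delta_left_mul_adj_tperm (R : rcfType) n (pi : 'S_n) (i j : 'I_n) : val j = (val i).+1 ->
  Delta R n (rsk_shape pi) (rsk_shape (left_mul_tperm (i, j) pi)) <= Num.sqrt (n%:R / 2%:R).
Proof.
move=> ij; rewrite /rsk_shape one_line_left_mul_tperm // Delta_shape_dist.
apply: half_le_sqrt_half; have := word_shape_dist_swap_adj (k := val i) (one_line_uniq pi).
rewrite !mem_one_line size_one_line; apply; [exact: ltn_ord | rewrite -ij; exact: ltn_ord].
Qed.

Lemma Delta_adj_path (R : rcfType) n (pi : 'S_n) (ks : seq ('I_n * 'I_n)) :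
  all (fun ij => val ij.2 == (val ij.1).+1) ks ->
  Delta R n (rsk_shape pi) (rsk_shape (foldl (fun p ij => left_mul_tperm ij p) pi ks))
    <= (size ks)%:R * Num.sqrt (n%:R / 2%:R).
Proof.
elim: ks pi => [|[i j] ks IH] pi /=; first by rewrite Delta_refl mul0r.
move=> /andP[/eqP ij aks].
apply: le_trans (Delta_triangle _ _ _ (rsk_shape (left_mul_tperm (i, j) pi)) _) _.
by rewrite -add1n natrD mulrDl mul1r lerD ?Delta_left_mul_adj_tperm ?IH.
Qed.

Theorem theorem5 (R : rcfType) (n t : nat) (pi tau : 'S_n) :
  adj_dist pi tau t ->
  Delta R n (rsk_shape pi) (rsk_shape tau) <= t%:R * Num.sqrt (n%:R / 2%:R).
Proof.
by case=> [[ks [<- aks <-]] _]; apply: Delta_adj_path.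
Qed.
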